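(* Let $p\ge 3$ be an odd integer, $\mu>0$ and $\alpha>0$. Let $(x_0,y_0)\in\mathbb{R}^2$ and let $(x,y)\in C^1([0,\infty);\mathbb{R}^2)$ be the global solution of \[ x'(t)=y(t),\qquad y'(t)=-\alpha x(t)^p-\mu y(t),\quad t>0,\qquad x(0)=x_0,\ y(0)=y_0. \] Define \[ \mathcal{E}(t):=\frac12 y(t)^2+\frac{\mu}{2}x(t)y(t)+\frac{\mu^2}{4}x(t)^2+\frac{\alpha}{p+1}x(t)^{p+1}. \] Then there exists a constant $C_\dagger>0$ such that \[ \mathcal{E}(t)\le C_\dagger\, t^{-\frac{2}{p-1}}\quad\text{for all } t>0. \] *)

From Stdlib Require Import Reals Lra Lia.
From Coquelicot Require Import Coquelicot.
Open Scope R_scope.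

Definition energy (p : nat) (mu alpha : R) (x y : R -> R) (t : R) : R :=
  / 2 * (y t) ^ 2 + mu / 2 * x t * y t + mu ^ 2 / 4 * (x t) ^ 2
  + alpha / (INR p + 1) * (x t) ^ (p + 1).

From Stdlib Require Import Reals Lra Lia.
From Coquelicot Require Import Coquelicot.
Open Scope R_scope.

(** The modified energy is a Lyapunov function: along solutions
    [E' = - mu/2 (y^2 + alpha x^(p+1)) <= 0], so [E] is nonincreasing and, by right
    continuity at [0], bounded by [E(0)].  Write [p = 2n + 1].  On the bounded sublevel
    set [{E <= E(0)}] one has [E <= B (x^2 + y^2)], hence
    [E^(n+1) <= K (y^(2n+2) + x^(2n+2)) <= K' (y^2 + x^(2n+2))], i.e. the differential
    inequality [E' <= - c E^(n+1)].  Then [(E^-n)' >= n c], so [E(t)^-n >= n c t] and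
    [E(t) <= (n c t)^(-1/n)], where [1/n = 2/(p-1)]. *)

(* [energy p mu alpha x y t] is convertible to
   [energy_form mu (alpha / (INR p + 1)) (p + 1) (x t) (y t)]. *)
Definition energy_form (mu g : R) (q : nat) (a b : R) : R :=
  / 2 * b ^ 2 + mu / 2 * a * b + mu ^ 2 / 4 * a ^ 2 + g * a ^ q.

Lemma energy_form_sos mu g q a b :
  energy_form mu g q a b = / 2 * (b + mu / 2 * a) ^ 2 + mu ^ 2 / 8 * a ^ 2 + g * a ^ q.
Proof. unfold energy_form. field. Qed.

Lemma pow_even_nonneg a n : 0 <= a ^ (2 * n).
Proof. rewrite pow_sqr. apply pow_le. nra. Qed.

Lemma energy_form_nonneg mu g n a b :
  0 <= g -> 0 <= energy_form mu g (2 * n) a b.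
Proof.
  intros Hg. rewrite energy_form_sos.
  pose proof (pow_even_nonneg a n). pose proof (pow2_ge_0 (b + mu / 2 * a)).
  pose proof (pow2_ge_0 (mu * a)). nra.
Qed.

Lemma energy_form_sublevel mu g n M a b :
  0 < mu -> 0 <= g -> energy_form mu g (2 * n) a b <= M ->
  a ^ 2 <= 8 * M / mu ^ 2 /\ b ^ 2 <= 8 * M.
Proof.
  intros Hmu Hg HM. rewrite energy_form_sos in HM.
  pose proof (pow_even_nonneg a n). pose proof (pow2_ge_0 (b + mu / 2 * a)).
  pose proof (pow2_ge_0 (b + mu * a)).
  assert (Hmu2 : 0 < mu ^ 2) by (apply pow_lt; lra).
  assert (Ha : mu ^ 2 * a ^ 2 <= 8 * M) by nra.
  split; [| nra].
  apply (Rmult_le_reg_l (mu ^ 2)); [lra |].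
  replace (mu ^ 2 * (8 * M / mu ^ 2)) with (8 * M) by (field; lra). exact Ha.
Qed.

(* On a sublevel set [a^2] is bounded, so the top-degree term [g a^(2n+2)] is
   dominated by [a^2]. *)
Lemma energy_form_le_sum_squares mu g n M :
  0 < mu -> 0 <= g -> 0 <= M ->
  exists B, 0 < B /\ forall a b, energy_form mu g (2 * (n + 1)) a b <= M ->
    energy_form mu g (2 * (n + 1)) a b <= B * (b ^ 2 + a ^ 2).
Proof.
  intros Hmu Hg HM. set (X := 8 * M / mu ^ 2).
  assert (HX : 0 <= X) by (apply Rdiv_le_0_compat; [lra | apply pow_lt; lra]).
  assert (HXn : 0 <= X ^ n) by (apply pow_le; lra).
  exists (1 + mu ^ 2 / 2 + g * X ^ n). split; [nra |].
  intros a b Hab. destruct (energy_form_sublevel mu g (n + 1) M a b Hmu Hg Hab) as [Ha _].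
  fold X in Ha.
  assert (Htop : g * a ^ (2 * (n + 1)) <= g * X ^ n * a ^ 2).
  { rewrite pow_sqr, pow_add, pow_1.
    assert (Han : (a * a) ^ n <= X ^ n) by (apply pow_incr; split; nra).
    replace (a ^ 2) with (a * a) by ring. rewrite Rmult_assoc.
    apply Rmult_le_compat_l; [lra |]. apply Rmult_le_compat_r; nra. }
  assert (Hcross : mu / 2 * a * b <= / 2 * b ^ 2 + mu ^ 2 / 8 * a ^ 2)
    by (pose proof (pow2_ge_0 (b - mu / 2 * a)); nra).
  assert (Hgb : 0 <= g * X ^ n * b ^ 2) by (pose proof (pow2_ge_0 b); apply Rmult_le_pos; nra).
  assert (Hmub : 0 <= mu ^ 2 * b ^ 2) by (pose proof (pow2_ge_0 (mu * b)); nra).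
  assert (Hmua : 0 <= mu ^ 2 * a ^ 2) by (pose proof (pow2_ge_0 (mu * a)); nra).
  pose proof (pow2_ge_0 a). unfold energy_form. lra.
Qed.

Lemma pow_plus_le u v n :
  0 <= u -> 0 <= v -> (u + v) ^ n <= 2 ^ n * (u ^ n + v ^ n).
Proof.
  intros Hu Hv. pose proof (pow_le u n Hu). pose proof (pow_le v n Hv).
  destruct (Rle_dec u v).
  - apply Rle_trans with ((2 * v) ^ n); [apply pow_incr; lra |].
    rewrite Rpow_mult_distr. pose proof (pow_lt 2 n). nra.
  - apply Rle_trans with ((2 * u) ^ n); [apply pow_incr; lra |].
    rewrite Rpow_mult_distr. pose proof (pow_lt 2 n). nra.
Qed.

Lemma pow_succ_le_bound u R n : 0 <= u <= R -> u ^ (n + 1) <= R ^ n * u.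
Proof.
  intros Hu. rewrite pow_add, pow_1.
  apply Rmult_le_compat_r; [lra |]. apply pow_incr. exact Hu.
Qed.

Lemma energy_form_pow_le mu g n M :
  0 < mu -> 0 <= g -> 0 <= M ->
  exists K, 0 < K /\ forall a b, energy_form mu g (2 * (n + 1)) a b <= M ->
    energy_form mu g (2 * (n + 1)) a b ^ (n + 1) <= K * (b ^ 2 + a ^ (2 * (n + 1))).
Proof.
  intros Hmu Hg HM.
  destruct (energy_form_le_sum_squares mu g n M Hmu Hg HM) as [B [HB HEB]].
  set (Y := (8 * M) ^ n).
  assert (HY : 0 <= Y) by (apply pow_le; lra).
  assert (H2B : 0 < (2 * B) ^ (n + 1)) by (apply pow_lt; lra).
  exists ((2 * B) ^ (n + 1) * (Y + 1)). split; [nra |].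
  intros a b Hab. pose proof (HEB a b Hab) as HeB.
  pose proof (energy_form_nonneg mu g (n + 1) a b Hg) as He.
  destruct (energy_form_sublevel mu g (n + 1) M a b Hmu Hg Hab) as [_ Hb].
  set (e := energy_form mu g (2 * (n + 1)) a b) in *.
  pose proof (pow2_ge_0 a). pose proof (pow2_ge_0 b).
  assert (Hsq : (b ^ 2 + a ^ 2) ^ (n + 1) <= 2 ^ (n + 1) * (Y * b ^ 2 + a ^ (2 * (n + 1)))).
  { apply Rle_trans with (2 ^ (n + 1) * ((b ^ 2) ^ (n + 1) + (a ^ 2) ^ (n + 1)));
      [apply pow_plus_le; lra |].
    apply Rmult_le_compat_l; [apply pow_le; lra |].
    rewrite pow_sqr. replace (a ^ 2) with (a * a) by ring.
    pose proof (pow_succ_le_bound (b ^ 2) (8 * M) n ltac:(lra)). unfold Y. lra. }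
  assert (Htop : 0 <= a ^ (2 * (n + 1))) by apply pow_even_nonneg.
  apply Rle_trans with ((B * (b ^ 2 + a ^ 2)) ^ (n + 1)); [apply pow_incr; lra |].
  rewrite Rpow_mult_distr, (Rpow_mult_distr 2 B), (Rmult_comm (2 ^ (n + 1))), !Rmult_assoc.
  apply Rmult_le_compat_l; [apply pow_le; lra |].
  apply Rle_trans with (2 ^ (n + 1) * (Y * b ^ 2 + a ^ (2 * (n + 1)))); [exact Hsq |].
  apply Rmult_le_compat_l; [apply pow_le; lra |].
  pose proof (Rmult_le_pos _ _ HY Htop). nra.
Qed.

Lemma energy_form_pow_le_dissipation mu g alpha n M :
  0 < mu -> 0 <= g -> 0 < alpha -> 0 <= M ->
  exists c, 0 < c /\ forall a b, energy_form mu g (2 * (n + 1)) a b <= M ->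
    c * energy_form mu g (2 * (n + 1)) a b ^ (n + 1) <= b ^ 2 + alpha * a ^ (2 * (n + 1)).
Proof.
  intros Hmu Hg Hal HM.
  destruct (energy_form_pow_le mu g n M Hmu Hg HM) as [K [HK HEK]].
  assert (Hr : 0 < Rmin 1 alpha) by (apply Rmin_glb_lt; lra).
  exists (Rmin 1 alpha / K). split; [apply Rdiv_lt_0_compat; lra |].
  intros a b Hab. pose proof (HEK a b Hab) as HeK.
  set (e := energy_form mu g (2 * (n + 1)) a b ^ (n + 1)) in *.
  assert (HeK' : e / K <= b ^ 2 + a ^ (2 * (n + 1))).
  { apply (Rmult_le_reg_r K); [lra |].
    replace (e / K * K) with e by (field; lra). lra. }
  pose proof (Rmin_l 1 alpha). pose proof (Rmin_r 1 alpha).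
  pose proof (pow2_ge_0 b). pose proof (pow_even_nonneg a (n + 1)).
  replace (Rmin 1 alpha / K * e) with (Rmin 1 alpha * (e / K)) by (field; lra).
  nra.
Qed.

Lemma filterlim_fun_plus {T} (F : (T -> Prop) -> Prop) {FF : Filter F} f g a b :
  filterlim f F (locally a) -> filterlim g F (locally b) ->
  filterlim (fun t => f t + g t) F (locally (a + b)).
Proof. intros Hf Hg. exact (filterlim_comp_2 f g Rplus Hf Hg (filterlim_plus a b)). Qed.

Lemma filterlim_fun_mult {T} (F : (T -> Prop) -> Prop) {FF : Filter F} f g a b :
  filterlim f F (locally a) -> filterlim g F (locally b) ->
  filterlim (fun t => f t * g t) F (locally (a * b)).
Proof. intros Hf Hg. exact (filterlim_comp_2 f g Rmult Hf Hg (filterlim_mult a b)). Qed.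

Lemma filterlim_fun_pow {T} (F : (T -> Prop) -> Prop) {FF : Filter F} (f : T -> R) a n :
  filterlim f F (locally a) -> filterlim (fun t => f t ^ n) F (locally (a ^ n)).
Proof.
  intros Hf. induction n as [| n IH]; simpl.
  - apply filterlim_const.
  - exact (filterlim_fun_mult F _ _ _ _ Hf IH).
Qed.

Lemma filterlim_energy_form {T} (F : (T -> Prop) -> Prop) {FF : Filter F}
    (x y : T -> R) a b mu g q :
  filterlim x F (locally a) -> filterlim y F (locally b) ->
  filterlim (fun t => energy_form mu g q (x t) (y t)) F (locally (energy_form mu g q a b)).
Proof.
  intros Hx Hy. unfold energy_form.
  repeat first [ apply filterlim_fun_plus | apply filterlim_fun_mult
               | apply filterlim_fun_pow | apply filterlim_const | assumption ].
Qed.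

Lemma is_derive_energy_form (x y : R -> R) mu g alpha p t :
  g * (INR p + 1) = alpha ->
  is_derive x t (y t) -> is_derive y t (- alpha * x t ^ p - mu * y t) ->
  is_derive (fun s => energy_form mu g (p + 1) (x s) (y s)) t
    (- (mu / 2) * (y t ^ 2 + alpha * x t ^ (p + 1))).
Proof.
  intros Hg Hx Hy. unfold energy_form.
  auto_derive; [repeat split; eexists; eauto |].
  replace (Derive (fun s => x s) t) with (y t) by (symmetry; now apply is_derive_unique).
  replace (Derive (fun s => y s) t) with (- alpha * x t ^ p - mu * y t)
    by (symmetry; now apply is_derive_unique).
  rewrite <- Hg.
  replace (p + 1)%nat with (S p) by lia. rewrite S_INR. simpl.
  set (z := x t ^ p). field.
Qed.

Lemma mean_value_is_derive (f df : R -> R) s t :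
  s < t -> (forall u, s <= u <= t -> is_derive f u (df u)) ->
  exists xi, s <= xi <= t /\ f t - f s = df xi * (t - s).
Proof.
  intros Hst Hd.
  destruct (MVT_gen f s t df) as [xi [Hxi Heq]];
    rewrite ?Rmin_left, ?Rmax_right in * by lra.
  - intros u Hu. apply Hd. lra.
  - intros u Hu. apply continuity_pt_filterlim, (ex_derive_continuous f).
    exists (df u). apply Hd. lra.
  - exists xi. auto.
Qed.

Lemma nonincreasing_of_is_derive_nonpos (f df : R -> R) a :
  (forall t, a < t -> is_derive f t (df t)) -> (forall t, a < t -> df t <= 0) ->
  forall s t, a < s -> s <= t -> f t <= f s.
Proof.
  intros Hd Hneg s t Hs Hst.
  destruct (Req_dec s t) as [<- | Hne]; [lra |].
  destruct (mean_value_is_derive f df s t) as [xi [Hxi Heq]]; [lra | |].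
  - intros u Hu. apply Hd. lra.
  - pose proof (Hneg xi ltac:(lra)). nra.
Qed.

Lemma le_at_right_limit (f : R -> R) a l :
  (forall s t, a < s -> s <= t -> f t <= f s) -> filterlim f (at_right a) (locally l) ->
  forall t, a < t -> f t <= l.
Proof.
  intros Hmono Hlim t Ht.
  assert (Hnear : at_right a (fun s => f t <= f s)).
  { assert (Hta : 0 < t - a) by lra.
    exists (mkposreal (t - a) Hta). intros s Hs Has.
    apply Hmono; [exact Has |].
    change (Rabs (s - a) < t - a) in Hs. apply Rabs_def2 in Hs. lra. }
  exact (filterlim_le (F := at_right a) (fun _ => f t) f (f t) l Hnear
           (filterlim_const (f t)) Hlim).
Qed.

(* [1 / E^n] has derivative [- n E' / E^(n+1) >= n c]. *)
Lemma inv_pow_growth (E D : R -> R) n c s t :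
  s < t -> (forall u, s <= u <= t -> 0 < E u) ->
  (forall u, s <= u <= t -> is_derive E u (D u)) ->
  (forall u, s <= u <= t -> D u <= - c * E u ^ (n + 1)) ->
  INR n * c * (t - s) <= / E t ^ n - / E s ^ n.
Proof.
  intros Hst Hpos Hd HD. destruct n as [| k]; [simpl; lra |].
  set (dinv := fun u => - (INR (S k) * D u * E u ^ k) / (E u ^ S k) ^ 2).
  destruct (mean_value_is_derive (fun u => / E u ^ S k) dinv s t)
    as [xi [Hxi ->]]; [lra | |].
  - intros u Hu. apply is_derive_inv; [apply is_derive_pow, Hd, Hu |].
    apply Rgt_not_eq, pow_lt, Hpos, Hu.
  - apply Rmult_le_compat_r; [lra |]. unfold dinv.
    pose proof (HD xi Hxi) as HDxi. pose proof (Hpos xi Hxi) as He.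
    set (e := E xi) in *. set (d := D xi) in *.
    assert (HP : 0 < e ^ k) by (apply pow_lt; lra).
    replace (e ^ (S k + 1)) with (e ^ k * e * e) in HDxi by (rewrite pow_add; simpl; ring).
    replace (e ^ S k) with (e ^ k * e) by (simpl; ring).
    pose proof (pos_INR (S k)).
    apply (Rmult_le_reg_r ((e ^ k * e) ^ 2)); [apply pow_lt; nra |].
    replace (- (INR (S k) * d * e ^ k) / (e ^ k * e) ^ 2 * (e ^ k * e) ^ 2)
      with (- (INR (S k) * d * e ^ k)) by (field; nra).
    assert (0 <= INR (S k) * e ^ k * (- d - c * (e ^ k * e * e))) by
      (apply Rmult_le_pos; nra).
    nra.
Qed.

Lemma le_Rpower_opp_inv e z n :
  (1 <= n)%nat -> 0 <= e -> 0 < z -> e ^ n * z <= 1 -> e <= Rpower z (- / INR n).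
Proof.
  intros Hn He Hz Hez.
  assert (HN : 0 < INR n) by (apply lt_0_INR; lia).
  assert (Hpow : 0 < Rpower z (/ INR n)) by apply exp_pos.
  rewrite Rpower_Ropp.
  destruct He as [He | <-]; [| apply Rlt_le, Rinv_0_lt_compat; exact Hpow].
  assert (He_root : e = Rpower (e ^ n) (/ INR n)).
  { rewrite <- Rpower_pow by lra. rewrite Rpower_mult, Rinv_r, Rpower_1; lra. }
  assert (Hroot : e * Rpower z (/ INR n) <= 1).
  { rewrite He_root at 1. rewrite Rpower_mult_distr by (try apply pow_lt; lra).
    apply Rle_trans with (Rpower 1 (/ INR n)).
    - apply Rle_Rpower_l; [apply Rlt_le, Rinv_0_lt_compat; lra |].
      split; [apply Rmult_lt_0_compat; [apply pow_lt |]; lra | exact Hez].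
    - unfold Rpower. rewrite ln_1, Rmult_0_r, exp_0. lra. }
  apply (Rmult_le_reg_r (Rpower z (/ INR n))); [exact Hpow |].
  rewrite Rinv_l by lra. exact Hroot.
Qed.

Lemma power_decay_of_dissipation (E D : R -> R) n c :
  (1 <= n)%nat -> 0 < c ->
  (forall t, 0 < t -> 0 <= E t) ->
  (forall t, 0 < t -> is_derive E t (D t)) ->
  (forall t, 0 < t -> D t <= - c * E t ^ (n + 1)) ->
  forall t, 0 < t -> E t <= Rpower (INR n * c * t) (- / INR n).
Proof.
  intros Hn Hc Hnn Hd HD t Ht.
  assert (HN : 0 < INR n) by (apply lt_0_INR; lia).
  assert (Hmono : forall s u, 0 < s -> s <= u -> E u <= E s).
  { apply (nonincreasing_of_is_derive_nonpos E D 0 Hd).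
    intros u Hu. pose proof (pow_le _ (n + 1) (Hnn u Hu)). pose proof (HD u Hu). nra. }
  assert (Hnc : 0 < INR n * c) by (apply Rmult_lt_0_compat; lra).
  apply le_Rpower_opp_inv; [exact Hn | apply Hnn, Ht | apply Rmult_lt_0_compat; lra |].
  destruct (Hnn t Ht) as [Hpos | <-]; [| rewrite pow_i by lia; lra].
  assert (Hgrowth : forall s, 0 < s < t -> INR n * c * (t - s) <= / E t ^ n).
  { intros s Hs.
    assert (HEpos : forall u, s <= u <= t -> 0 < E u)
      by (intros u Hu; apply Rlt_le_trans with (E t); [exact Hpos | apply Hmono; lra]).
    pose proof (inv_pow_growth E D n c s t (proj2 Hs) HEpos
                  (fun u Hu => Hd u ltac:(lra)) (fun u Hu => HD u ltac:(lra))).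
    assert (0 < / E s ^ n) by (apply Rinv_0_lt_compat, pow_lt, HEpos; lra).
    lra. }
  assert (Hinv : INR n * c * t <= / E t ^ n).
  { apply le_epsilon. intros eps Heps.
    set (s := Rmin (t / 2) (eps / (INR n * c))).
    assert (Hs : 0 < s) by (apply Rmin_glb_lt; [lra | apply Rdiv_lt_0_compat; lra]).
    assert (Hcs : INR n * c * s <= eps).
    { apply Rle_trans with (INR n * c * (eps / (INR n * c))).
      - apply Rmult_le_compat_l; [lra | apply Rmin_r].
      - right. field. lra. }
    assert (Hst : s < t) by (apply Rle_lt_trans with (t / 2); [apply Rmin_l | lra]).
    pose proof (Hgrowth s (conj Hs Hst)).
    lra. }
  assert (HEn : 0 < E t ^ n) by (apply pow_lt; exact Hpos).
  apply Rle_trans with (E t ^ n * / E t ^ n); [| right; field; lra].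
  apply Rmult_le_compat_l; lra.
Qed.

Section Solution.

Variables (mu alpha : R) (n : nat) (x y : R -> R).
Hypotheses (Hmu : 0 < mu) (Hal : 0 < alpha).
Hypothesis Hx' : forall t, 0 < t -> is_derive x t (y t).
Hypothesis Hy' : forall t, 0 < t -> is_derive y t (- alpha * x t ^ (2 * n + 1) - mu * y t).
Hypothesis Hx0 : filterlim x (at_right 0) (locally (x 0)).
Hypothesis Hy0 : filterlim y (at_right 0) (locally (y 0)).

Let g := alpha / (INR (2 * n + 1) + 1).
Let E (t : R) : R := energy_form mu g (2 * (n + 1)) (x t) (y t).
Let D (t : R) : R := - (mu / 2) * (y t ^ 2 + alpha * x t ^ (2 * (n + 1))).

Let g_nonneg : 0 <= g.
Proof. apply Rlt_le, Rdiv_lt_0_compat; pose proof (pos_INR (2 * n + 1)); lra. Qed.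

Let E_is_derive t : 0 < t -> is_derive E t (D t).
Proof.
  intros Ht. unfold E, D. replace (2 * (n + 1))%nat with (2 * n + 1 + 1)%nat by lia.
  apply is_derive_energy_form; auto.
  unfold g. field. pose proof (pos_INR (2 * n + 1)). lra.
Qed.

Let E_nonneg t : 0 <= E t.
Proof. apply energy_form_nonneg, g_nonneg. Qed.

Let E_nonincreasing : forall s t, 0 < s -> s <= t -> E t <= E s.
Proof.
  apply (nonincreasing_of_is_derive_nonpos E D 0 E_is_derive). intros t _. unfold D.
  pose proof (pow2_ge_0 (y t)).
  pose proof (Rmult_le_pos alpha _ (Rlt_le _ _ Hal) (pow_even_nonneg (x t) (n + 1))). nra.
Qed.

Let E_le_initial t : 0 < t -> E t <= E 0.
Proof.
  apply (le_at_right_limit E 0 (E 0) E_nonincreasing), (filterlim_energy_form (at_right 0));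
    assumption.
Qed.

Let E_dissipation : exists c, 0 < c /\ forall t, 0 < t -> D t <= - c * E t ^ (n + 1).
Proof.
  destruct (energy_form_pow_le_dissipation mu g alpha n (E 0) Hmu g_nonneg Hal (E_nonneg 0))
    as [c [Hc Hdiss]].
  exists (mu / 2 * c). split; [nra |]. intros t Ht.
  pose proof (Hdiss (x t) (y t) (E_le_initial t Ht)) as Hdt. fold (E t) in Hdt.
  unfold D. nra.
Qed.

Lemma energy_solution_decay : (1 <= n)%nat ->
  exists C, 0 < C /\ forall t, 0 < t ->
    energy (2 * n + 1) mu alpha x y t <= C * Rpower t (- / INR n).
Proof.
  intros Hn. destruct E_dissipation as [c [Hc HD]].
  assert (Hnc : 0 < INR n * c) by (apply Rmult_lt_0_compat; [apply lt_0_INR; lia | lra]).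
  exists (Rpower (INR n * c) (- / INR n)). split; [apply exp_pos |]. intros t Ht.
  rewrite Rpower_mult_distr by lra.
  change (energy (2 * n + 1) mu alpha x y t) with (energy_form mu g (2 * n + 1 + 1) (x t) (y t)).
  replace (2 * n + 1 + 1)%nat with (2 * (n + 1))%nat by lia.
  exact (power_decay_of_dissipation E D n c Hn Hc (fun t _ => E_nonneg t) E_is_derive HD t Ht).
Qed.

End Solution.

Theorem proposition2 (p : nat) (mu alpha x0 y0 : R) (x y : R -> R) :
  (3 <= p)%nat -> Nat.Odd p -> 0 < mu -> 0 < alpha ->
  (* (x,y) is a solution on [0, oo): C^1 on (0,oo), continuous at 0 from the right *)
  (forall t, 0 < t -> is_derive x t (y t)) ->
  (forall t, 0 < t -> is_derive y t (- alpha * (x t) ^ p - mu * y t)) ->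
  filterlim x (at_right 0) (locally (x 0)) ->
  filterlim y (at_right 0) (locally (y 0)) ->
  x 0 = x0 -> y 0 = y0 ->
  exists C : R, 0 < C /\
    forall t, 0 < t -> energy p mu alpha x y t <= C * Rpower t (- (2 / (INR p - 1))).
Proof.
  intros Hp3 [n ->] Hmu Hal Hx' Hy' Hx0 Hy0 _ _.
  destruct (energy_solution_decay mu alpha n x y Hmu Hal Hx' Hy' Hx0 Hy0) as [C [HC Hdecay]];
    [lia |].
  exists C. split; [exact HC |]. intros t Ht.
  replace (- (2 / (INR (2 * n + 1) - 1))) with (- / INR n); [exact (Hdecay t Ht) |].
  assert (HN : 0 < INR n) by (apply lt_0_INR; lia).
  rewrite plus_INR, mult_INR. simpl. field. lra.
Qed.
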